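(* Suppose the dynamic deficiency of the network is $1$ and that the network has a positive steady state $x^*\in\mathbb{R}_{>0}^n$. Let $C_1,\dots,C_k$ (after reordering) be the complexes that do not lie in any terminal strongly connected component of $G$, and let $\chi\in\ker M\setminus\ker\mathcal{L}(G)$. Then $\chi_i\neq0$ for $1\le i\le k$, and for every steady state $x$ and every $2\le i\le k$, \[x^{C_i}=\frac{\chi_i}{\chi_1}\,x^{C_1},\] each of these being a type 1 complex-linear invariant on $C_1,\dots,C_k$.
   Context: Setup: species $S_1,\dots,S_n$, concentrations $x$, complexes $C_1,\dots,C_m\in\mathbb{Z}_{\ge0}^n$, reaction graph $G$ on complexes with positive edge labels $\kappa_{ij}$. Laplacian $\mathcal{L}(G)$: $\mathcal{L}(G)_{ji}=\kappa_{ij}$ for edges $C_i\to C_j$, other off-diagonal entries $0$, $\mathcal{L}(G)_{ii}=-\sum_j\kappa_{ij}$. $Y$ is the $n\times m$ matrix with columns $C_i$; $x^C=\prod_jx_j^{C(S_j)}$, $\Psi(x)=(x^{C_1},\dots,x^{C_m})^\top$; dynamics $dx/dt=Y\mathcal{L}(G)\Psi(x)$; $M=Y\mathcal{L}(G)$; steady state means $M\Psi(x)=0$. A strongly connected component of $G$ is a maximal subgraph in which any two nodes are joined by directed paths in both directions; it is terminal if no edge leaves it. $\ker\mathcal{L}(G)$ is spanned by vectors each supported on the nodes of a single terminal strongly connected component. The dynamic deficiency is $\delta_D=\dim\ker M-\dim\ker\mathcal{L}(G)$. A type 1 complex-linear invariant on $C_1,\dots,C_k$ is a polynomial $a_1x^{C_1}+\dots+a_kx^{C_k}$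 with $(a_1,\dots,a_k,0,\dots,0)$ in the row span of $M$. *)

From HB Require Import structures.
From mathcomp Require Import all_boot all_order all_algebra.
Set Implicit Arguments. Unset Strict Implicit. Unset Printing Implicit Defensive.
Import Order.TTheory GRing.Theory Num.Theory.
Local Open Scope ring_scope.

(* A reaction network with n species and m complexes over a real field R:
   - Y : 'M[nat]_(n, m), column i is the complex C_i (Y j i = C_i(S_j));
   - kappa : 'M[R]_m, kappa i j = label of edge C_i -> C_j
     (edge iff kappa i j != 0; labels are positive; no self-loops). *)

Definition valid_labels (R : realFieldType) (m : nat) (kappa : 'M[R]_m) : Prop :=
  (forall i j, 0 <= kappa i j) /\ (forall i, kappa i i = 0).

Definition edge (R : realFieldType) (m : nat) (kappa : 'M[R]_m) : rel 'I_m :=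
  fun i j => kappa i j != 0.

Definition scc (R : realFieldType) (m : nat) (kappa : 'M[R]_m) (i : 'I_m) : {set 'I_m} :=
  [set j | connect (edge kappa) i j && connect (edge kappa) j i].

Definition terminal_set (R : realFieldType) (m : nat) (kappa : 'M[R]_m) (S : {set 'I_m}) : bool :=
  [forall a, forall b, ((a \in S) && edge kappa a b) ==> (b \in S)].

Definition in_terminal_scc (R : realFieldType) (m : nat) (kappa : 'M[R]_m) (i : 'I_m) : bool :=
  terminal_set kappa (scc kappa i).

Definition laplacian (R : realFieldType) (m : nat) (kappa : 'M[R]_m) : 'M[R]_m :=
  \matrix_(j, i) (if j == i then - \sum_(l < m) kappa i l else kappa i j).

Definition Ymx (R : realFieldType) (n m : nat) (Y : 'M[nat]_(n, m)) : 'M[R]_(n, m) :=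
  \matrix_(j, i) (Y j i)%:R.

Definition Mmx (R : realFieldType) (n m : nat) (Y : 'M[nat]_(n, m)) (kappa : 'M[R]_m)
  : 'M[R]_(n, m) := Ymx R Y *m laplacian kappa.

Definition monom (R : realFieldType) (n m : nat) (Y : 'M[nat]_(n, m)) (x : 'I_n -> R)
  (i : 'I_m) : R := \prod_(j < n) x j ^+ Y j i.

Definition Psi (R : realFieldType) (n m : nat) (Y : 'M[nat]_(n, m)) (x : 'I_n -> R)
  : 'cV[R]_m := \col_i monom Y x i.

Definition steady_state (R : realFieldType) (n m : nat) (Y : 'M[nat]_(n, m))
  (kappa : 'M[R]_m) (x : 'I_n -> R) : Prop :=
  (forall j, 0 <= x j) /\ Mmx Y kappa *m Psi Y x = 0.

(* dimension of the (right) kernel {v | A v = 0} *)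
Definition dimker (R : realFieldType) (p m : nat) (A : 'M[R]_(p, m)) : nat :=
  \rank (kermx A^T).

Definition dyn_deficiency (R : realFieldType) (n m : nat) (Y : 'M[nat]_(n, m))
  (kappa : 'M[R]_m) : int :=
  (dimker (Mmx Y kappa))%:Z - (dimker (laplacian kappa))%:Z.

(* type 1 complex-linear invariant on the set S of complexes:
   coefficient vector a is in the row span of M and supported on S *)
Definition type1_invariant (R : realFieldType) (n m : nat) (Y : 'M[nat]_(n, m))
  (kappa : 'M[R]_m) (S : {set 'I_m}) (a : 'rV[R]_m) : Prop :=
  (a <= Mmx Y kappa)%MS /\ (forall l, a 0 l != 0 -> l \in S).

From HB Require Import structures.
From mathcomp Require Import all_boot all_order all_algebra.
Import Order.TTheory GRing.Theory Num.Theory.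
Local Open Scope ring_scope.

(* Write [L] for the Laplacian of the reaction graph and [M = Y L].
   1. Graph facts: every complex reaches a terminal strongly connected
      component, and edges never leave one.
   2. Flux conservation: a vector [v] with [L v = 0] is balanced (inflow =
      outflow at every node), and a set receiving no flux from outside
      sends none out.  Applied to the non-terminal support of [v], this
      makes that support closed under edges, hence empty: [ker L] vanishes
      on non-terminal complexes.
   3. Deficiency one: [ker L] has codimension one in [ker M] and [chi] lies
      in the difference, so [ker M = ker L + R chi].  Consequently every
      vector of [ker M] -- in particular [Psi(x)] at a steady state -- is a
      multiple of [chi] on the non-terminal complexes, and a linear form
      supported there that kills [chi] lies in the row space of [M].
   4. A positive steady state has positive monomials, forcing [chi_i <> 0]
      on non-terminal complexes; the theorem follows with the forms
      [x^{C_i} - (chi_i / chi_i1) x^{C_i1}]. *)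

Lemma connect_forward_closed {T : finType} {e : rel T} {S : {pred T}} {i j : T} :
  (forall a b, a \in S -> e a b -> b \in S) -> connect e i j -> i \in S -> j \in S.
Proof.
move=> clS /connectP[p + ->]; elim: p i => [|a p IHp] i //= /andP[eia pa] iS.
exact: IHp pa (clS _ _ iS eia).
Qed.

Section ReactionGraph.

Context {R : realFieldType} {m : nat} (kappa : 'M[R]_m).

Lemma scc_self (i : 'I_m) : i \in scc kappa i.
Proof. by rewrite inE connect0. Qed.

Lemma scc_eq {i j : 'I_m} :
  connect (edge kappa) i j -> connect (edge kappa) j i -> scc kappa j = scc kappa i.
Proof.
move=> cij cji; apply/setP=> k; rewrite !inE.
apply/andP/andP => [[cjk ckj]|[cik cki]]; split.
- exact: connect_trans cij cjk.
- exact: connect_trans ckj cji.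
- exact: connect_trans cji cik.
- exact: connect_trans cki cij.
Qed.

Lemma terminal_edge {i j : 'I_m} :
  in_terminal_scc kappa i -> edge kappa i j -> in_terminal_scc kappa j.
Proof.
move=> Ti eij.
have : j \in scc kappa i.
  by move/forallP: Ti => /(_ i)/forallP/(_ j)/implyP; apply; rewrite scc_self eij.
by rewrite inE => /andP[cij cji]; rewrite /in_terminal_scc (scc_eq cij cji).
Qed.

(* Every node reaches a terminal strongly connected component: a node [j]
   reachable from [i] whose set of successors is minimal is in one. *)
Lemma reach_terminal (i : 'I_m) :
  exists2 j, connect (edge kappa) i j & in_terminal_scc kappa j.
Proof.
pose succ j := [set k | connect (edge kappa) j k].
have [j cij min_j] := arg_minnP (fun j => #|succ j|) (connect0 (edge kappa) i).
exists j => //; apply/forallP => a; apply/forallP => b; apply/implyP.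
rewrite inE => /andP[/andP[cja _] eab].
have cjb : connect (edge kappa) j b := connect_trans cja (connect1 eab).
have sub_bj : succ b \subset succ j.
  by apply/subsetP => k; rewrite !inE; apply: connect_trans.
have /eqP eq_bj : succ b == succ j.
  by rewrite eqEcard sub_bj min_j //; apply: connect_trans cij cjb.
have : j \in succ b by rewrite eq_bj inE connect0.
by rewrite !inE cjb => ->.
Qed.

End ReactionGraph.

Section LaplacianKernel.

Context {R : realFieldType} {m : nat} (kappa : 'M[R]_m).
Hypothesis hkappa : valid_labels kappa.

Definition outflow (j : 'I_m) : R := \sum_(l < m) kappa j l.

Definition balanced (v : 'I_m -> R) : Prop :=
  forall j, \sum_(i < m) kappa i j * v i = outflow j * v j.

Lemma laplacian_mulE (p : nat) (V : 'M[R]_(m, p)) (j : 'I_m) (q : 'I_p) :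
  (laplacian kappa *m V) j q = \sum_(i < m) kappa i j * V i q - outflow j * V j q.
Proof.
have [_ kappa_diag] := hkappa.
rewrite mxE (bigD1 j) //= mxE eqxx [in RHS](bigD1 j) //= kappa_diag mul0r add0r.
rewrite mulNr addrC; congr (_ + _).
by apply: eq_bigr => i ij; rewrite mxE eq_sym (negbTE ij).
Qed.

Lemma laplacian_ker_balanced {p : nat} {V : 'M[R]_(m, p)} (q : 'I_p) :
  laplacian kappa *m V = 0 -> balanced (fun i => V i q).
Proof.
by move=> LV j; apply/eqP; rewrite -subr_eq0 -laplacian_mulE LV mxE.
Qed.

(* Summing [|v|] times
   the outflow over [S] and using the triangle inequality shows that the
   flux leaving [S], a sum of nonnegative terms, is nonpositive. *)
Lemma balanced_no_outflux {v : 'I_m -> R} {S : {set 'I_m}} :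
  balanced v ->
  (forall i j, i \notin S -> j \in S -> kappa i j * v i = 0) ->
  forall i j, i \in S -> j \notin S -> kappa i j * v i = 0.
Proof.
move=> bal no_influx; have [kappa_ge0 _] := hkappa.
have inflowS j : j \in S -> \sum_i kappa i j * v i = \sum_(i in S) kappa i j * v i.
  move=> jS; rewrite (bigID (mem S)) /= [X in _ + X]big1 ?addr0 // => i iS.
  exact: no_influx.
have outflow_le : \sum_(j in S) outflow j * `|v j|
    <= \sum_(i in S) `|v i| * \sum_(j in S) kappa i j.
  rewrite [X in _ <= X](eq_bigr (fun i => \sum_(j in S) `|v i| * kappa i j)).
    2: by move=> i _; rewrite mulr_sumr.
  rewrite [X in _ <= X]exchange_big /=; apply: ler_sum => j jS.
  have outflow_ge0 : 0 <= outflow j by apply: sumr_ge0.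
  rewrite -(ger0_norm outflow_ge0) -normrM -bal inflowS //; apply: le_trans (ler_norm_sum _ _ _) _.
  by apply: ler_sum => i _; rewrite normrM (ger0_norm (kappa_ge0 i j)) mulrC.
have term_ge0 i : 0 <= `|v i| * \sum_(j | j \notin S) kappa i j.
  by rewrite mulr_ge0 ?sumr_ge0.
have outflow_split i : outflow i * `|v i|
    = `|v i| * \sum_(j in S) kappa i j + `|v i| * \sum_(j | j \notin S) kappa i j.
  by rewrite /outflow (bigID (mem S)) /= mulrC mulrDr.
have outflux0 : \sum_(i in S) `|v i| * \sum_(j | j \notin S) kappa i j = 0.
  apply/eqP; rewrite eq_le sumr_ge0 ?andbT //.
  by move: outflow_le; rewrite (eq_bigr _ (fun i _ => outflow_split i)) big_split /= gerDl.
move=> i j iS jS; have /eqP := psumr_eq0P (fun i _ => term_ge0 i) outflux0 iS.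
rewrite mulf_eq0 normr_eq0 => /orP[/eqP -> | ]; first by rewrite mulr0.
by move/eqP/(psumr_eq0P (fun l _ => kappa_ge0 i l))/(_ j jS) ->; rewrite mul0r.
Qed.

(* The kernel of [L(G)] is supported on the terminal strongly connected
   components: the non-terminal support of a balanced vector receives no
   flux, hence is closed under edges, yet it would reach a terminal node. *)
Lemma laplacian_ker_nonterminal {p : nat} {V : 'M[R]_(m, p)} :
  laplacian kappa *m V = 0 ->
  forall i q, ~~ in_terminal_scc kappa i -> V i q = 0.
Proof.
move=> LV i q Ti; pose v k := V k q.
pose S := [set k | ~~ in_terminal_scc kappa k && (v k != 0)].
have no_influx k j : k \notin S -> j \in S -> kappa k j * v k = 0.
  rewrite !inE negb_and negbK => /orP[Tk /andP[Tj _] | /negPn/eqP -> _]; last first.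
    by rewrite mulr0.
  suff /eqP -> : kappa k j == 0 by rewrite mul0r.
  by apply: contraNT Tj => ekj; exact: terminal_edge Tk ekj.
have S_closed k j : k \in S -> edge kappa k j -> j \in S.
  move=> kS ekj; apply: contraT => jS; move: (kS); rewrite inE => /andP[_ vk].
  have /eqP := balanced_no_outflux (laplacian_ker_balanced q LV) no_influx k j kS jS.
  by rewrite mulf_eq0 (negbTE ekj) (negbTE vk).
apply/eqP; apply: contraT => vi; have iS : i \in S by rewrite inE Ti vi.
have [j cij Tj] := reach_terminal kappa i.
by have := connect_forward_closed S_closed cij iS; rewrite inE Tj.
Qed.

End LaplacianKernel.

Section RatioRow.

Context {R : fieldType} {m : nat} (chi : 'cV[R]_m) (i1 i : 'I_m).

Definition ratio_row : 'rV[R]_m :=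
  \row_l ((l == i)%:R - chi i 0 / chi i1 0 * (l == i1)%:R).

Lemma ratio_row_support (l : 'I_m) : ratio_row 0 l != 0 -> (l == i) || (l == i1).
Proof.
rewrite mxE; case: (l == i) => //; case: (l == i1) => //.
by rewrite mulr0 subr0 eqxx.
Qed.

Lemma ratio_row_mul : i != i1 -> chi i1 0 != 0 -> ratio_row *m chi = 0.
Proof.
move=> ne_ii1 chi1_neq0; apply/rowP => q; rewrite ord1 !mxE.
rewrite (bigD1 i) //= (bigD1 i1) 1?eq_sym //= big1 ?addr0; last first.
  by move=> l /andP[li li1]; rewrite mxE (negbTE li) (negbTE li1) mulr0 subr0 mul0r.
rewrite !mxE eqxx (negbTE ne_ii1) eq_sym (negbTE ne_ii1) eqxx.
by rewrite mulr0 subr0 sub0r mulr1 mul1r mulNr divfK // subrr.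
Qed.

End RatioRow.

Section DeficiencyOne.

Context {R : realFieldType} {n m : nat} {Y : 'M[nat]_(n, m)} {kappa : 'M[R]_m}.
Context {chi : 'cV[R]_m}.
Hypothesis hdef : dyn_deficiency Y kappa = 1.
Hypothesis hchiM : Mmx Y kappa *m chi = 0.
Hypothesis hchiL : laplacian kappa *m chi != 0.

Local Notation L := (laplacian kappa).
Local Notation M := (Mmx Y kappa).

(* Deficiency one: [ker M = ker L(G) + R chi], because [ker L(G) <= ker M]
   has codimension one and [chi] lies in the difference. *)
Lemma ker_M_decomposition {p : nat} {W : 'M[R]_(m, p)} :
  M *m W = 0 -> exists V (D : 'rV[R]_p), L *m V = 0 /\ W = V + chi *m D.
Proof.
move=> MW; set KL := kermx L^T; set KM := kermx M^T.
have rank_KM : \rank KM = (\rank KL).+1.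
  move: hdef; rewrite /dyn_deficiency /dimker -/KL -/KM.
  by move/eqP; rewrite subr_eq -PoszD => /eqP [->]; rewrite add1n.
have KL_KM : (KL <= KM)%MS.
  by apply/sub_kermxP; rewrite /Mmx trmx_mul mulmxA mulmx_ker mul0mx.
have chi_KM : (chi^T <= KM)%MS.
  by apply/sub_kermxP; rewrite -trmx_mul hchiM trmx0.
have chi_notKL : ~~ (chi^T <= KL)%MS.
  by apply: contra hchiL => /sub_kermxP; rewrite -trmx_mul => /eqP; rewrite trmx_eq0.
have KM_sum : (KM <= KL + chi^T)%MS.
  have sum_KM : (KL + chi^T <= KM)%MS by rewrite addsmx_sub KL_KM chi_KM.
  rewrite -(geq_leqif (mxrank_leqif_sup sum_KM)) rank_KM.
  rewrite (ltn_leqif (mxrank_leqif_sup (addsmxSl KL chi^T))).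
  by apply: contra chi_notKL; apply: submx_trans (addsmxSr _ _).
have W_KM : (W^T <= KM)%MS by apply/sub_kermxP; rewrite -trmx_mul MW trmx0.
have [[U D] /= defW] := sub_addsmxP (submx_trans W_KM KM_sum).
exists (U *m KL)^T, D^T; split.
  by rewrite trmx_mul mulmxA -[L]trmxK -trmx_mul mulmx_ker trmx0 mul0mx.
by rewrite -[W]trmxK defW linearD /= [in X in _ + X]trmx_mul trmxK.
Qed.

Hypothesis hkappa : valid_labels kappa.

Lemma ker_M_nonterminal {p : nat} {W : 'M[R]_(m, p)} :
  M *m W = 0 -> exists D : 'rV[R]_p,
  forall i q, ~~ in_terminal_scc kappa i -> W i q = chi i 0 * D 0 q.
Proof.
move=> /ker_M_decomposition [V [D [LV ->]]]; exists D => i q Ti.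
by rewrite !mxE (laplacian_ker_nonterminal kappa hkappa LV i q Ti) add0r big_ord1.
Qed.

Lemma steady_state_monomials (x : 'I_n -> R) : steady_state Y kappa x ->
  exists c, forall i, ~~ in_terminal_scc kappa i -> monom Y x i = chi i 0 * c.
Proof.
case=> _ /ker_M_nonterminal [D defPsi]; exists (D 0 0) => i Ti.
by rewrite -defPsi // mxE.
Qed.

(* A positive steady state has positive monomials, so [chi] cannot vanish
   on a non-terminal complex. *)
Lemma chi_nonterminal_neq0 :
  (exists xs : 'I_n -> R, (forall j, 0 < xs j) /\ steady_state Y kappa xs) ->
  forall i, ~~ in_terminal_scc kappa i -> chi i 0 != 0.
Proof.
case=> xs [xs_pos /steady_state_monomials [c Hc]] i Ti.
have : 0 < monom Y xs i by apply: prodr_gt0 => j _; apply: exprn_gt0.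
by rewrite Hc //; apply: contraTneq => ->; rewrite mul0r ltxx.
Qed.

(* A linear form supported on non-terminal complexes that vanishes on [chi]
   vanishes on [ker M], hence lies in the row space of [M]. *)
Lemma annihilator_in_rowspace (a : 'rV[R]_m) :
  (forall l, a 0 l != 0 -> ~~ in_terminal_scc kappa l) -> a *m chi = 0 ->
  (a <= M)%MS.
Proof.
move=> supp_a a_chi; rewrite submxE.
have [D defW] := ker_M_nonterminal (mulmx_coker M).
suff -> : a *m cokermx M = a *m chi *m D by rewrite a_chi mul0mx.
rewrite -mulmxA; apply/rowP => q; rewrite !mxE; apply: eq_bigr => l _.
have [-> | /supp_a Tl] := eqVneq (a 0 l) 0; first by rewrite !mul0r.
by rewrite defW // mxE big_ord1.
Qed.

End DeficiencyOne.

Theorem mainTheorem4 (R : realFieldType) (n m : nat)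
  (Y : 'M[nat]_(n, m)) (kappa : 'M[R]_m)
  (hkappa : valid_labels kappa)
  (hdef : dyn_deficiency Y kappa = 1)
  (hpos : exists xs : 'I_n -> R, (forall j, 0 < xs j) /\ steady_state Y kappa xs)
  (chi : 'cV[R]_m)
  (hchiM : Mmx Y kappa *m chi = 0)
  (hchiL : laplacian kappa *m chi != 0) :
  (forall i, ~~ in_terminal_scc kappa i -> chi i 0 != 0) /\
  (forall i1 i, ~~ in_terminal_scc kappa i1 -> ~~ in_terminal_scc kappa i -> i != i1 ->
     (forall x : 'I_n -> R, steady_state Y kappa x ->
        monom Y x i = chi i 0 / chi i1 0 * monom Y x i1) /\
     type1_invariant Y kappa [set l | ~~ in_terminal_scc kappa l]
       (\row_l ((l == i)%:R - chi i 0 / chi i1 0 * (l == i1)%:R))).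
Proof.
have chi_neq0 := chi_nonterminal_neq0 hdef hchiM hchiL hkappa hpos.
split=> // i1 i T1 Ti ne_ii1; have chi1_neq0 := chi_neq0 i1 T1; split.
  move=> x /(steady_state_monomials hdef hchiM hchiL hkappa) [c Hc].
  by rewrite !Hc // mulrA divfK.
have supp l : ratio_row chi i1 i 0 l != 0 -> ~~ in_terminal_scc kappa l.
  by move/ratio_row_support/orP => [] /eqP ->.
split; last by move=> l /supp; rewrite inE.
exact: annihilator_in_rowspace hdef hchiM hchiL hkappa _ supp
  (ratio_row_mul chi i1 i ne_ii1 chi1_neq0).
Qed.
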